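(* Let $T$ be a decomposition tree of a distance-hereditary graph $G$, and let $v$ be an internal node of $T$ labeled $\oplus$ with left child $v_l$ and right child $v_r$, such that property (P) holds at $v_l$ and at $v_r$. Assume that $\hat\alpha(v_r)\le\hat\beta(v_l)$, and that neither ($\hat\alpha(v_l)=\hat\beta(v_r)=0$) nor ($\hat\alpha(v_r)=\hat\beta(v_l)=0$) holds. Then $\hat{min}(v)=\hat{min}(v_l)+\hat{min}(v_r)$.
   Context: All graphs are finite, simple, undirected. For a graph $H$ and $S\subseteq V(H)$, $N_H[S]$ is $S$ together with all vertices adjacent to a vertex of $S$, and $H[S]$ is the induced subgraph. Graphs carry a ''twin set'': a single-vertex graph on $x$ has twin set $\{x\}$. For vertex-disjoint graphs $G_l,G_r$ with twin sets $TS(G_l),TS(G_r)$: the true twin operation $G_l\otimes G_r$ has vertex set $V(G_l)\cup V(G_r)$, edge set $E(G_l)\cup E(G_r)\cup\{uw: u\in TS(G_l), w\in TS(G_r)\}$ and twin set $TS(G_l)\cup TS(G_r)$; the false twin operation $G_l\odot G_r$ has vertex set $V(G_l)\cup V(G_r)$, edge set $E(G_l)\cup E(G_r)$, twin set $TS(G_l)\cup TS(G_r)$; the attachment operation $G_l\oplus G_r$ has the same vertex and edge sets as $G_l\otimes G_r$ and twin set $TS(G_l)$. A decomposition tree $T$ of $G$ is a rooted binary tree whose leaves are in bijection with $V(G)$, each internal node having a left and a right child and a label in $\{\otimes,\odot,\oplus\}$; for each node $v$ define $\hat G(v)$ and $\hat{TS}(v)$ recursively: for a leaf $x$, the single-vertex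 graph on $x$ with twin set $\{x\}$; for an internal node $v$ with label $\circ$ and children $v_l,v_r$, $\hat G(v)=\hat G(v_l)\circ\hat G(v_r)$ with the corresponding twin set; one requires $\hat G(\text{root})=G$. Then $\hat G(v)$ is the subgraph of $G$ induced by the set $\hat V(v)$ of leaves below $v$. For a node $u$ and $0\le k\le|\hat{TS}(u)|$, call $S\subseteq\hat V(u)$ $k$-feasible if $\hat V(u)\setminus\hat{TS}(u)\subseteq N_{\hat G(u)}[S]$ and there is $X\subseteq S\cap\hat{TS}(u)$ with $|X|=k$ such that $\hat G(u)[S\setminus X]$ has a perfect matching. $\hat\gamma_k(u)$ is the minimum size of a $k$-feasible set. $\hat{min}(u)=\min\{\hat\gamma_k(u):0\le k\le|\hat{TS}(u)|\}$, and $\hat\alpha(u)$, $\hat\beta(u)$ are the smallest and the largest $k$ with $\hat\gamma_k(u)=\hat{min}(u)$. Property (P) holds at $u$ if for every $0\le k\le|\hat{TS}(u)|$: $\hat\gamma_k(u)=\hat{min}(u)+\hat\alpha(u)-k$ when $k\le\hat\alpha(u)$; $\hat\gamma_k(u)=\hat{min}(u)+k-\hat\beta(u)$ when $k\ge\hat\beta(u)$; $\hat\gamma_k(u)=\hat{min}(u)$ when $\hat\alpha(u)<k<\hat\beta(u)$ and $k-\hat\alpha(u)$ is even; and $\hat\gamma_k(u)=\hat{min}(u)+1$ otherwise. *)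

From mathcomp Require Import all_boot.
Set Implicit Arguments. Unset Strict Implicit. Unset Printing Implicit Defensive.

Section DH.
Variable T : finType.

(** ** Simple graphs on the vertex type [T] (vertex set = all of [T]) *)
Definition simple_graph (e : rel T) := symmetric e /\ irreflexive e.

Definition walk_in (e : rel T) (S : {set T}) (x y : T) (n : nat) : Prop :=
  exists p : seq T, [&& path e x p, last x p == y, all (fun z => z \in S) (x :: p)
                      & size p == n].

Definition is_dist (e : rel T) (S : {set T}) (x y : T) (n : nat) : Prop :=
  walk_in e S x y n /\ forall m, m < n -> ~ walk_in e S x y m.

Definition connected_in (e : rel T) (S : {set T}) : Prop :=
  forall x y, x \in S -> y \in S -> exists n, walk_in e S x y n.

Definition distance_hereditary (e : rel T) : Prop :=
  forall S : {set T}, connected_in e S ->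
  forall x y n, x \in S -> y \in S -> (is_dist e S x y n <-> is_dist e setT x y n).

Inductive dop := OTrue (* ⊗ *) | OFalse (* ⊙ *) | OAttach (* ⊕ *).

Inductive dtree := DLeaf of T | DNode of dop & dtree & dtree.

Fixpoint leaves (t : dtree) : seq T :=
  match t with DLeaf x => [:: x] | DNode _ l r => leaves l ++ leaves r end.

Definition dV (t : dtree) : {set T} := [set x in leaves t].

Fixpoint dTS (t : dtree) : {set T} :=
  match t with
  | DLeaf x => [set x]
  | DNode OAttach l _ => dTS l
  | DNode _ l r => dTS l :|: dTS r
  end.

Fixpoint dedge (t : dtree) (x y : T) : bool :=
  match t with
  | DLeaf _ => false
  | DNode o l r =>
      [|| dedge l x y, dedge r x y
        | (match o with OFalse => false | _ => true end) &&
          ((x \in dTS l) && (y \in dTS r) || (x \in dTS r) && (y \in dTS l))]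
  end.

Definition is_dtree_of (e : rel T) (t : dtree) : Prop :=
  uniq (leaves t) /\ (forall x, x \in leaves t) /\ (forall x y, e x y = dedge t x y).

Inductive subtree (v : dtree) : dtree -> Prop :=
  | sub_refl : subtree v v
  | sub_l o l r : subtree v l -> subtree v (DNode o l r)
  | sub_r o l r : subtree v r -> subtree v (DNode o l r).

Definition has_perfect_matching (e : rel T) (W : {set T}) : bool :=
  [exists M : {set {set T}},
     [forall m in M, exists x, exists y,
        [&& m == [set x; y], x != y, e x y, x \in W & y \in W]]
  && [forall x in W, #|[set m in M | x \in m]| == 1]].

Definition closed_nbhd (u : dtree) (S : {set T}) : {set T} :=
  S :|: [set x | [exists y in S, dedge u y x]].

Definition kfeasible (u : dtree) (k : nat) (S : {set T}) : bool :=
  [&& S \subset dV u,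
      (dV u :\: dTS u) \subset closed_nbhd u S
    & [exists X : {set T}, [&& X \subset S :&: dTS u, #|X| == k
                             & has_perfect_matching (dedge u) (S :\: X)]]].

(* \hat\gamma_k(u), with None = +infinity (no k-feasible set) *)
Definition gammaO (u : dtree) (k : nat) : option nat :=
  if [exists S : {set T}, kfeasible u k S]
  then Some (\big[minn/#|T|]_(S : {set T} | kfeasible u k S) #|S|)
  else None.

Definition nTS (u : dtree) : nat := #|dTS u|.

(* \hat{min}(u), None = +infinity *)
Definition minO (u : dtree) : option nat :=
  if [exists k : 'I_(nTS u).+1, gammaO u k != None]
  then Some (\big[minn/#|T|]_(k < (nTS u).+1 | gammaO u k != None) odflt 0 (gammaO u k))
  else None.

Definition alpha (u : dtree) : nat :=
  \big[minn/nTS u]_(k < (nTS u).+1 | gammaO u k == minO u) k.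

Definition beta (u : dtree) : nat :=
  \max_(k < (nTS u).+1 | gammaO u k == minO u) k.

(* Property (P), in extended arithmetic (None = +infinity) *)
Definition propP (u : dtree) : Prop :=
  forall k, k <= nTS u ->
    gammaO u k =
    omap (fun m =>
            if k <= alpha u then m + alpha u - k
            else if beta u <= k then m + k - beta u
            else if ~~ odd (k - alpha u) then m
            else m + 1) (minO u).

Definition oaddn (a b : option nat) : option nat :=
  match a, b with Some x, Some y => Some (x + y) | _, _ => None end.

End DH.

From mathcomp Require Import all_boot all_order.
Set Implicit Arguments. Unset Strict Implicit. Unset Printing Implicit Defensive.
Import Order.TTheory.

(* A perfect matching
   of S \ X in G(v) splits into matchings inside G(vl) and G(vr) and c cross
   edges; the c cross-matched vertices of each side can be declared unmatched
   twins there, so S is cut into a (k+c)-feasible set for vl and a c-feasible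
   set for vr: min(v) >= min(vl) + min(vr).  Conversely, glue an optimal
   beta(vl)-feasible set of vl to an optimal alpha(vr)-feasible set of vr by
   matching the alpha(vr) unmatched twins of vr with as many of the beta(vl)
   unmatched twins of vl; this needs alpha(vr) <= beta(vl), and beta(vl) > 0
   provides a twin of vl dominating all of TS(vr). *)

Lemma subset_of_card (T : finType) (A : {set T}) n :
  n <= #|A| -> exists2 B : {set T}, B \subset A & #|B| = n.
Proof.
case/card_geqP=> s [us <- sA]; exists [set x in s]; last by rewrite cardsE (card_uniqP us).
by apply/subsetP => x; rewrite inE => /sA.
Qed.

Lemma cardsU_disjoint (T : finType) (A B : {set T}) :
  [disjoint A & B] -> #|A :|: B| = #|A| + #|B|.
Proof. by move=> AB; apply/eqP; rewrite (leq_card_setU A B).2. Qed.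

Lemma set2_eq (T : finType) (x y a b : T) :
  [set x; y] = [set a; b] -> a != b -> (x == a) && (y == b) || (x == b) && (y == a).
Proof.
move=> /setP Exy; move: (Exy a) (Exy b); rewrite !inE !eqxx ?orbT.
by case/orP=> /eqP <-; case/orP=> /eqP <-; rewrite ?eqxx ?orbT.
Qed.

Section PerfectMatching.
Variables (T : finType) (e : rel T).
Hypothesis e_sym : symmetric e.
Implicit Types (A B W : {set T}) (f : T -> T).

Definition perfect_mate W f :=
  {in W, forall x, [/\ f x \in W, f x != x, e x (f x) & f (f x) = x]}.

Lemma perfect_mate_matching W f : perfect_mate W f -> has_perfect_matching e W.
Proof.
move=> Mf; apply/existsP; exists [set [set x; f x] | x in W].
apply/andP; split; apply/forall_inP.
  move=> _ /imsetP[x xW ->]; have [fxW fxx exf _] := Mf x xW.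
  by apply/existsP; exists x; apply/existsP; exists (f x); rewrite eqxx eq_sym fxx exf xW.
move=> x xW; apply/cards1P; exists [set x; f x]; apply/setP => m; rewrite !inE.
apply/andP/eqP => [[/imsetP[y yW ->]]|->]; last by rewrite set21 (imset_f (fun y => [set y; f y])).
have [_ _ _ ffy] := Mf y yW.
by rewrite !inE => /orP[]/eqP->; rewrite ?ffy // setUC.
Qed.

Lemma matching_perfect_mate W : has_perfect_matching e W -> exists f, perfect_mate W f.
Proof.
case/existsP=> M /andP[/forall_inP Mpair /forall_inP Mcover].
have pairP m : m \in M -> exists a b,
    [&& m == [set a; b], a != b, e a b, a \in W & b \in W].
  by move=> /Mpair /existsP[a /existsP[b ?]]; exists a, b.
have blockP x : x \in W -> exists2 m, m \in M &
    x \in m /\ forall m', m' \in M -> x \in m' -> m' = m.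
  move=> xW; have /cards1P[m Em] := Mcover x xW.
  have /[!inE] /andP[mM xm] : m \in [set m in M | x \in m] by rewrite Em set11.
  exists m => //; split => // m' m'M xm'.
  by apply/set1P; rewrite -Em inE m'M.
pose mate x := odflt x [pick y | [set x; y] \in M].
have mateM x : x \in W -> [set x; mate x] \in M.
  move=> xW; rewrite /mate; case: pickP => [y //|none].
  have [m mM [xm _]] := blockP x xW.
  have [a [b /and5P[/eqP mab _ _ _ _]]] := pairP m mM.
  move: xm; rewrite mab !inE => /orP[]/eqP xab; subst x.
  - by have /= := none b; rewrite -mab mM.
  - by have /= := none a; rewrite setUC -mab mM.
have mateP x : x \in W -> [/\ mate x \in W, mate x != x & e x (mate x)].
  move=> xW; have [a [b /and5P[/eqP mab ab eab aW bW]]] := pairP _ (mateM x xW).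
  case/orP: (set2_eq mab ab) => /andP[/eqP xa /eqP mb]; rewrite mb xa;
    by split; rewrite // 1?eq_sym 1?e_sym.
exists mate => x xW; have [mxW mxx exm] := mateP x xW; split => //.
have [m _ [_ uniq_m]] := blockP _ mxW.
have E : [set mate x; mate (mate x)] = [set x; mate x].
  by rewrite (uniq_m _ (mateM _ mxW) (set21 _ _)) (uniq_m [set x; mate x]) ?mateM ?set22.
have [_ mmx _] := mateP _ mxW.
have /[!inE] : mate (mate x) \in [set x; mate x] by rewrite -E set22.
by rewrite (negbTE mmx) orbF => /eqP.
Qed.

Lemma has_perfect_matchingP W :
  reflect (exists f, perfect_mate W f) (has_perfect_matching e W).
Proof.
by apply: (iffP idP) => [/matching_perfect_mate|[f /perfect_mate_matching]].
Qed.

Lemma perfect_mateU W1 W2 f1 f2 : [disjoint W1 & W2] ->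
  perfect_mate W1 f1 -> perfect_mate W2 f2 ->
  perfect_mate (W1 :|: W2) (fun x => if x \in W1 then f1 x else f2 x).
Proof.
move=> W12 M1 M2 x /setUP[xW|xW].
  by have [fxW ? ? ffx] := M1 x xW; rewrite /= xW fxW ffx inE fxW.
have [fxW ? ? ffx] := M2 x xW.
by rewrite /= (disjointFl W12 xW) (disjointFl W12 fxW) ffx inE fxW orbT.
Qed.

Lemma perfect_mate_complete_bipartite A B : [disjoint A & B] -> #|A| = #|B| ->
  {in A & B, forall x y, e x y} -> exists f, perfect_mate (A :|: B) f.
Proof.
move=> AB cardAB eAB.
pose transfer (C D : {set T}) x := nth x (enum D) (index x (enum C)).
have transferK (C D : {set T}) x : #|C| = #|D| -> x \in C ->
    transfer C D x \in D /\ transfer D C (transfer C D x) = x.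
  rewrite !cardE -mem_enum => CD xC.
  have ix : index x (enum C) < size (enum D) by rewrite -CD index_mem.
  rewrite -mem_enum; split; first exact: mem_nth.
  by rewrite /transfer index_uniq ?enum_uniq // (set_nth_default x) ?CD // nth_index.
exists (fun x => if x \in A then transfer A B x else transfer B A x).
move=> x /setUP[xA|xB].
  have [yB yx] := transferK _ _ x cardAB xA.
  rewrite /= xA (disjointFl AB yB) yx inE yB orbT eAB //; split=> //.
  by apply: contraTneq yB => ->; rewrite (disjointFr AB xA).
have [yA yx] := transferK _ _ x (esym cardAB) xB; have xA := disjointFl AB xB.
rewrite /= xA yA yx inE yA e_sym eAB //; split=> //.
by apply: contraTneq yA => ->; rewrite xA.
Qed.

Definition crossing f W A B := [set x in W :&: A | f x \in B].

Lemma card_crossing W A B f : perfect_mate W f ->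
  #|crossing f W A B| = #|crossing f W B A|.
Proof.
move=> Mf; have finj : {in W &, injective f}.
  by move=> x y xW yW Efxy; have [_ _ _ <-] := Mf x xW; have [_ _ _ <-] := Mf y yW; rewrite Efxy.
have -> : crossing f W B A = f @: crossing f W A B.
  apply/setP => y; apply/idP/imsetP => [|[x]].
    rewrite !inE => /andP[/andP[yW yB] fyA]; have [fyW _ _ ffy] := Mf y yW.
    by exists (f y); rewrite // !inE fyW fyA ffy.
  rewrite !inE => /andP[/andP[xW xA] fxB] ->; have [fxW _ _ ->] := Mf x xW.
  by rewrite fxW fxB.
by rewrite card_in_imset // => x y /setIdP[/setIP[xW _] _] /setIdP[/setIP[yW _] _]; apply: finj.
Qed.

Lemma perfect_mate_noncrossing W A B f : [disjoint A & B] -> W \subset A :|: B ->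
  perfect_mate W f -> perfect_mate (W :&: A :\: crossing f W A B) f.
Proof.
move=> AB WAB Mf x; rewrite !inE => /and3P[ncross xW xA].
have [fxW fxx exf ffx] := Mf x xW; rewrite xW xA /= in ncross.
have fxA : f x \in A by have /setUP[] := subsetP WAB _ fxW; rewrite // (negbTE ncross).
by rewrite fxW fxA ffx (disjointFr AB xA).
Qed.

End PerfectMatching.

Lemma perfect_mate_mono (T : finType) (e e' : rel T) (W : {set T}) (f : T -> T) :
  perfect_mate e W f -> {in W &, forall x y, e x y -> e' x y} -> perfect_mate e' W f.
Proof. by move=> Mf ee' x xW; have [fxW ? /ee' ? ?] := Mf x xW; split; auto. Qed.

Section DecompositionTree.
Variable T : finType.
Implicit Types (u l r : dtree T) (S X : {set T}) (x y : T).

Lemma dV_node o l r : dV (DNode o l r) = dV l :|: dV r.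
Proof. by apply/setP => x; rewrite !inE mem_cat. Qed.

Lemma dTS_subset_dV u : dTS u \subset dV u.
Proof.
elim: u => [x|o l IHl r IHr]; first by rewrite sub1set inE mem_seq1.
rewrite dV_node; case: o => /=; try exact: setUSS.
exact: subset_trans IHl (subsetUl _ _).
Qed.

Lemma notin_dTS u x : x \notin dV u -> x \notin dTS u.
Proof. exact/contra/subsetP/dTS_subset_dV. Qed.

Lemma dedge_dV u x y : dedge u x y -> (x \in dV u) && (y \in dV u).
Proof.
elim: u => [//|o l IHl r IHr] /=; rewrite dV_node !in_setU.
case/or3P => [/IHl/andP[-> ->]|/IHr/andP[-> ->]|/andP[_ cross]]; rewrite ?orbT //.
have [sl sr] := (subsetP (dTS_subset_dV l), subsetP (dTS_subset_dV r)).
by case/orP: cross => /andP[] => [/sl -> /sr ->|/sr -> /sl ->]; rewrite ?orbT.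
Qed.

Lemma dedgeFl u x y : x \notin dV u -> dedge u x y = false.
Proof. by apply: contraNF => /dedge_dV/andP[]. Qed.

Lemma dedgeFr u x y : y \notin dV u -> dedge u x y = false.
Proof. by apply: contraNF => /dedge_dV/andP[]. Qed.

Lemma dedge_sym u : symmetric (dedge u).
Proof.
elim: u => [//|o l IHl r IHr] x y /=.
by rewrite IHl IHr (orbC ((x \in _) && _)) (andbC (x \in dTS l)) (andbC (x \in dTS r)).
Qed.

Lemma dedge_node_swap o l r : dedge (DNode o l r) =2 dedge (DNode o r l).
Proof. by move=> x y /=; rewrite orbCA (orbC ((x \in dTS l) && _)). Qed.

Lemma closed_nbhd_node_swap o l r S :
  closed_nbhd (DNode o l r) S = closed_nbhd (DNode o r l) S.
Proof.
by congr (_ :|: _); apply/eq_finset => x; apply/eq_existsb => y; rewrite dedge_node_swap.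
Qed.

Lemma uniq_leaves_subtree (v t : dtree T) : subtree v t -> uniq (leaves t) -> uniq (leaves v).
Proof. by elim=> [//|o l r _ IH|o l r _ IH] /=; rewrite cat_uniq => /and3P[? _ ?]; auto. Qed.

Lemma disjoint_dV_children o l r : uniq (leaves (DNode o l r)) -> [disjoint dV l & dV r].
Proof.
rewrite /= cat_uniq => /and3P[_ lr _]; rewrite -setI_eq0; apply/eqP/setP => x.
by rewrite !inE; apply: contraNF lr => /andP[xl xr]; apply/hasP; exists x.
Qed.

Lemma closed_nbhdP u S x :
  reflect (x \in S \/ exists2 y, y \in S & dedge u y x) (x \in closed_nbhd u S).
Proof.
rewrite !inE; apply: (iffP orP) => [] [->|]; auto.
  by move=> /exists_inP[y]; right; exists y.
by move=> [y yS eyx]; right; apply/exists_inP; exists y.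
Qed.

Lemma kfeasibleP u k S :
  reflect [/\ S \subset dV u, dV u :\: dTS u \subset closed_nbhd u S &
     exists X f, [/\ X \subset S :&: dTS u, #|X| = k & perfect_mate (dedge u) (S :\: X) f]]
    (kfeasible u k S).
Proof.
apply: (iffP and3P) => [] [SV Sdom].
  by case/existsP=> X /and3P[XS /eqP Xk /has_perfect_matchingP[|f Mf]];
     [exact: dedge_sym | split => //; exists X, f].
case=> X [f [XS Xk Mf]]; split => //; apply/existsP; exists X.
by rewrite XS Xk eqxx; apply/has_perfect_matchingP; [exact: dedge_sym | exists f].
Qed.

Lemma kfeasible_subset_dV u k S : kfeasible u k S -> S \subset dV u.
Proof. by case/kfeasibleP. Qed.

Section Node.
Variables (o : dop) (l r : dtree T).
Hypothesis lr : [disjoint dV l & dV r].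

Lemma dedge_node_l x y : x \in dV l -> y \in dV l -> dedge (DNode o l r) x y = dedge l x y.
Proof.
move=> /(disjointFr lr)/negbT xr /(disjointFr lr)/negbT yr.
by rewrite /= [dedge r x y]dedgeFl // (negbTE (notin_dTS xr)) (negbTE (notin_dTS yr)) !andbF !orbF.
Qed.

Lemma dedge_node_private_l x y : x \in dV l -> x \notin dTS l ->
  dedge (DNode o l r) y x = dedge l y x.
Proof.
move=> /(disjointFr lr)/negbT xr /negbTE xTl.
by rewrite /= [dedge r y x]dedgeFr // (negbTE (notin_dTS xr)) xTl !andbF !orbF.
Qed.

Lemma closed_nbhd_node_private_l S x : x \in dV l -> x \notin dTS l ->
  (x \in closed_nbhd (DNode o l r) S) = (x \in closed_nbhd l (S :&: dV l)).
Proof.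
move=> xl xTl; apply/closed_nbhdP/closed_nbhdP; rewrite inE xl andbT.
  case=> [|[y yS]]; [by left | rewrite dedge_node_private_l // => eyx].
  by right; exists y; rewrite // inE yS; case/andP: (dedge_dV eyx).
case=> [|[y /setIP[yS _]]]; [by left | rewrite -dedge_node_private_l // => eyx].
by right; exists y.
Qed.

End Node.

Lemma dedge_node_r o l r (lr : [disjoint dV l & dV r]) x y :
  x \in dV r -> y \in dV r -> dedge (DNode o l r) x y = dedge r x y.
Proof. by rewrite dedge_node_swap; apply: dedge_node_l; rewrite disjoint_sym. Qed.

Lemma closed_nbhd_node_private_r o l r (lr : [disjoint dV l & dV r]) S x :
  x \in dV r -> x \notin dTS r ->
  (x \in closed_nbhd (DNode o l r) S) = (x \in closed_nbhd r (S :&: dV r)).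
Proof.
by rewrite closed_nbhd_node_swap; apply: closed_nbhd_node_private_l; rewrite disjoint_sym.
Qed.

End DecompositionTree.

Section Optimum.
Variable T : finType.
Implicit Types (u : dtree T) (S : {set T}).

Lemma kfeasible_le_nTS u k S : kfeasible u k S -> k <= nTS u.
Proof.
by case/kfeasibleP=> _ _ [X [f [XS <- _]]]; apply/subset_leq_card/(subset_trans XS)/subsetIr.
Qed.

Lemma gammaO_le_card u k S : kfeasible u k S -> exists2 g, gammaO u k = Some g & g <= #|S|.
Proof.
move=> HS; rewrite /gammaO; case: existsP => [_|[]]; last by exists S.
by eexists; first reflexivity; rewrite -minEnat -leEnat; exact: bigmin_le_cond.
Qed.

Lemma gammaO_attained u k g : gammaO u k = Some g -> exists2 S, kfeasible u k S & #|S| = g.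
Proof.
rewrite /gammaO; case: existsP => // -[S0 HS0] [<-]; rewrite -minEnat.
have [S HS ->] := eq_bigmin (x := #|T|) _ _ (fun S => #|S|) HS0 (fun S _ => max_card S).
by exists S.
Qed.

Lemma minO_le_card u k S : kfeasible u k S -> exists2 m, minO u = Some m & m <= #|S|.
Proof.
move=> HS; have [g Hg gS] := gammaO_le_card HS.
have k_lt : k < (nTS u).+1 by rewrite ltnS (kfeasible_le_nTS HS).
have Pk : gammaO u (Ordinal k_lt) != None by rewrite Hg.
rewrite /minO; case: existsP => [_|[]]; last by exists (Ordinal k_lt).
eexists; first reflexivity; apply: leq_trans gS.
have -> : g = odflt 0 (gammaO u (Ordinal k_lt)) by rewrite /= Hg.
by rewrite -minEnat -leEnat; exact: bigmin_le_cond.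
Qed.

Lemma minO_attained u m : minO u = Some m -> exists k : 'I_(nTS u).+1, gammaO u k = Some m.
Proof.
rewrite /minO; case: existsP => // -[k0 Hk0] [<-]; rewrite -minEnat.
have le_T k : gammaO u k != None -> odflt 0 (gammaO u k) <= #|T|.
  by case Hk: (gammaO u k) => [g|] // _; have [S _ <-] := gammaO_attained Hk; exact: max_card.
have [k Hk ->] := eq_bigmin (x := #|T|) _ _ (fun k : 'I__ => odflt 0 (gammaO u k)) Hk0 le_T.
by exists k; move: Hk; rewrite unfold_in; case: (gammaO u k).
Qed.

Lemma gammaO_alpha u m : minO u = Some m -> gammaO u (alpha u) = Some m.
Proof.
move=> Hm; have [k0 Hk0] := minO_attained Hm.
have P0 : gammaO u k0 == minO u by rewrite Hk0 Hm.
rewrite /alpha -minEnat.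
have [k /[!unfold_in] /eqP Hk ->] := eq_bigmin (x := nTS u) _
  (fun k : 'I__ => gammaO u k == minO u) val P0 (fun k _ => ltnSE (ltn_ord k)).
by rewrite Hk Hm.
Qed.

Lemma gammaO_beta u m : minO u = Some m -> gammaO u (beta u) = Some m.
Proof.
move=> Hm; have [k0 Hk0] := minO_attained Hm.
have P0 : gammaO u k0 == minO u by rewrite Hk0 Hm.
rewrite /beta -maxEnat.
have [k /[!unfold_in] /eqP Hk ->] := eq_bigmax (x := 0) _
  (fun k : 'I__ => gammaO u k == minO u) val P0 (fun k _ => leq0n k).
by rewrite Hk Hm.
Qed.

End Optimum.

Section Attach.
Variables (T : finType) (vl vr : dtree T).
Hypothesis lr : [disjoint dV vl & dV vr].
Local Notation v := (DNode OAttach vl vr).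
Implicit Types (S X : {set T}) (x y : T).

Lemma dedge_attach_cross x y : x \in dV vl -> y \in dV vr ->
  dedge v x y = (x \in dTS vl) && (y \in dTS vr).
Proof.
move=> xl yr; have /negbT xr := disjointFr lr xl; have /negbT yl := disjointFl lr yr.
rewrite /= [dedge vl x y]dedgeFr // [dedge vr x y]dedgeFl //.
by rewrite (negbTE (notin_dTS xr)) (negbTE (notin_dTS yl)) !andbF !orbF.
Qed.

Lemma card_attach_split S : S \subset dV v -> #|S| = #|S :&: dV vl| + #|S :&: dV vr|.
Proof.
rewrite dV_node => SV; rewrite -cardsU_disjoint -?setIUr; first by rewrite (setIidPl SV).
exact: disjointW (subsetIr _ _) (subsetIr _ _) lr.
Qed.

Section AttachSplit.
Variables (S X : {set T}) (f : T -> T).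
Hypotheses (SV : S \subset dV v) (Sdom : dV v :\: dTS v \subset closed_nbhd v S).
Hypotheses (XS : X \subset S :&: dTS v) (Mf : perfect_mate (dedge v) (S :\: X) f).
Local Notation W := (S :\: X).
Local Notation Cl := (crossing f W (dV vl) (dV vr)).
Local Notation Cr := (crossing f W (dV vr) (dV vl)).

Let XTl : X \subset dTS vl := subset_trans XS (subsetIr _ _).

Let WV : W \subset dV vl :|: dV vr.
Proof. by rewrite -(dV_node OAttach); exact: subset_trans (subsetDl _ _) SV. Qed.

Lemma kfeasible_attach_split_l : kfeasible vl (#|X| + #|Cl|) (S :&: dV vl).
Proof.
have ClW : Cl \subset W by apply/subsetP => x /setIdP[/setIP[]].
have ClVl : Cl \subset dV vl by apply/subsetP => x /setIdP[/setIP[]].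
have ClTl : Cl \subset dTS vl.
  apply/subsetP => x /setIdP[/setIP[xW xl] fxr]; have [_ _ exf _] := Mf xW.
  by move: exf; rewrite dedge_attach_cross // => /andP[].
apply/kfeasibleP; split; first exact: subsetIr.
  apply/subsetP => x /setDP[xl xTl].
  rewrite -(closed_nbhd_node_private_l OAttach lr) //; apply: (subsetP Sdom).
  by rewrite in_setD dV_node in_setU xl xTl.
exists (X :|: Cl), f; split.
- rewrite subUset !subsetI XTl ClTl ClVl (subset_trans XTl (dTS_subset_dV _)).
  by rewrite (subset_trans XS (subsetIl _ _)) (subset_trans ClW (subsetDl _ _)).
- rewrite cardsU_disjoint // disjoint_sym disjoints_subset.
  by apply/subsetP => x /(subsetP ClW) /setDP[_ xX]; rewrite inE.
have -> : S :&: dV vl :\: (X :|: Cl) = W :&: dV vl :\: Cl.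
  by apply/setP => x; rewrite !(in_setD, in_setI, in_setU); case: (x \in X); case: (x \in Cl).
apply: (perfect_mate_mono (perfect_mate_noncrossing lr WV Mf)).
by move=> x y /setDP[/setIP[_ xl] _] /setDP[/setIP[_ yl] _]; rewrite dedge_node_l.
Qed.

Lemma kfeasible_attach_split_r : kfeasible vr #|Cr| (S :&: dV vr).
Proof.
have CrTr : Cr \subset dTS vr.
  apply/subsetP => y /setIdP[/setIP[yW yr] fyl]; have [_ _ eyf _] := Mf yW.
  by move: eyf; rewrite dedge_sym dedge_attach_cross // => /andP[].
apply/kfeasibleP; split; first exact: subsetIr.
  apply/subsetP => x /setDP[xr xTr].
  rewrite -(closed_nbhd_node_private_r OAttach lr) //; apply: (subsetP Sdom).
  by rewrite in_setD dV_node in_setU xr orbT (notin_dTS (negbT (disjointFl lr xr))).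
exists Cr, f; split=> //.
  rewrite !subsetI CrTr andbT; apply/andP; split.
    by apply/subsetP => x /setIdP[/setIP[/setDP[xS _] _] _].
  by apply/subsetP => x /setIdP[/setIP[]].
have -> : S :&: dV vr :\: Cr = W :&: dV vr :\: Cr.
  apply/setP => x; rewrite !(in_setD, in_setI); case xr: (x \in dV vr); rewrite ?andbF //.
  have xX : x \notin X.
    by apply: contraFN (disjointFl lr xr); apply/subsetP/(subset_trans XTl)/dTS_subset_dV.
  by rewrite xX.
have WV' : W \subset dV vr :|: dV vl by rewrite setUC.
have lr' : [disjoint dV vr & dV vl] by rewrite disjoint_sym.
apply: (perfect_mate_mono (perfect_mate_noncrossing lr' WV' Mf)).
by move=> x y /setDP[/setIP[_ xr] _] /setDP[/setIP[_ yr] _]; rewrite dedge_node_r.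
Qed.

End AttachSplit.

Lemma kfeasible_attach_split k S : kfeasible v k S ->
  exists c, kfeasible vl (k + c) (S :&: dV vl) /\ kfeasible vr c (S :&: dV vr).
Proof.
case/kfeasibleP=> SV Sdom [X [f [XS <- Mf]]].
exists #|crossing f (S :\: X) (dV vl) (dV vr)|; split.
  exact: kfeasible_attach_split_l.
rewrite (card_crossing _ _ Mf); exact: kfeasible_attach_split_r.
Qed.

Section AttachJoin.
Variables (Sl Xl Sr Xr : {set T}).
Hypotheses (SlV : Sl \subset dV vl) (SrV : Sr \subset dV vr).
Hypotheses (XlS : Xl \subset Sl :&: dTS vl) (XrS : Xr \subset Sr :&: dTS vr).

Let XlSl : Xl \subset Sl := subset_trans XlS (subsetIl _ _).
Let XlTl : Xl \subset dTS vl := subset_trans XlS (subsetIr _ _).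
Let XrSr : Xr \subset Sr := subset_trans XrS (subsetIl _ _).
Let XrTr : Xr \subset dTS vr := subset_trans XrS (subsetIr _ _).
Let SlSr : [disjoint Sl & Sr] := disjointW SlV SrV lr.

Lemma dominates_attach_join : Xl != set0 ->
  dV vl :\: dTS vl \subset closed_nbhd vl Sl -> dV vr :\: dTS vr \subset closed_nbhd vr Sr ->
  dV v :\: dTS v \subset closed_nbhd v (Sl :|: Sr).
Proof.
move=> /set0Pn[w wXl] Sldom Srdom.
have Sl_part : (Sl :|: Sr) :&: dV vl = Sl.
  have /disjoint_setI0 Sr_l : [disjoint Sr & dV vl].
    by rewrite disjoint_sym; exact: disjointWr SrV lr.
  by rewrite setIUl (setIidPl SlV) Sr_l setU0.
have Sr_part : (Sl :|: Sr) :&: dV vr = Sr.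
  have /disjoint_setI0 Sl_r : [disjoint Sl & dV vr] by exact: disjointWl SlV lr.
  by rewrite setIUl (setIidPl SrV) Sl_r set0U.
apply/subsetP => x /setDP[]; rewrite dV_node => /setUP[xl|xr] xTl.
  rewrite (closed_nbhd_node_private_l OAttach lr) // Sl_part.
  by apply: (subsetP Sldom); rewrite in_setD xl xTl.
have [xTr|xTr] := boolP (x \in dTS vr).
  apply/closed_nbhdP; right; exists w; first by rewrite in_setU (subsetP XlSl).
  by rewrite dedge_attach_cross ?(subsetP XlTl) // (subsetP SlV) ?(subsetP XlSl).
rewrite (closed_nbhd_node_private_r OAttach lr) // Sr_part.
by apply: (subsetP Srdom); rewrite in_setD xr xTr.
Qed.

Lemma perfect_mate_attach_join (Cl : {set T}) (fl fr : T -> T) : Cl \subset Xl -> #|Cl| = #|Xr| ->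
  perfect_mate (dedge vl) (Sl :\: Xl) fl -> perfect_mate (dedge vr) (Sr :\: Xr) fr ->
  exists f, perfect_mate (dedge v) ((Sl :|: Sr) :\: (Xl :\: Cl)) f.
Proof.
move=> ClXl ClXr_card Ml Mr; have ClSl := subset_trans ClXl XlSl.
have ClXr_edges : {in Cl & Xr, forall x y, dedge v x y}.
  move=> x y xCl yXr; have xXl := subsetP ClXl x xCl.
  rewrite dedge_attach_cross ?(subsetP XlTl) ?(subsetP XrTr) //.
    exact/(subsetP SlV)/(subsetP XlSl).
  exact/(subsetP SrV)/(subsetP XrSr).
have [g Mg] := perfect_mate_complete_bipartite (@dedge_sym _ v)
  (disjointW ClSl XrSr SlSr) ClXr_card ClXr_edges.
have -> : (Sl :|: Sr) :\: (Xl :\: Cl) = (Sl :\: Xl) :|: ((Sr :\: Xr) :|: (Cl :|: Xr)).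
  apply/setP => x; rewrite !(in_setD, in_setU).
  have ClXl_x : (x \in Cl) ==> (x \in Xl) by apply/implyP/subsetP.
  have XlSl_x : (x \in Xl) ==> (x \in Sl) by apply/implyP/subsetP.
  have XrSr_x : (x \in Xr) ==> (x \in Sr) by apply/implyP/subsetP.
  have SlSr_x : (x \in Sl) ==> (x \notin Sr) by apply/implyP => /(disjointFr SlSr) ->.
  by move: ClXl_x XlSl_x XrSr_x SlSr_x; case: (x \in Cl); case: (x \in Xl);
     case: (x \in Sl); case: (x \in Xr); case: (x \in Sr).
eexists; apply: perfect_mateU; last apply: perfect_mateU; last exact: Mg.
- rewrite disjoints_subset; apply/subsetP => x /setDP[xSl xXl].
  have xSr := disjointFr SlSr xSl.
  rewrite in_setC !in_setU in_setD xSr (contraNF (subsetP ClXl x) xXl).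
  by rewrite (contraFF (subsetP XrSr x) xSr).
- by apply: (perfect_mate_mono Ml) => x y _ _ exy; rewrite /= exy.
- rewrite disjoints_subset; apply/subsetP => x /setDP[xSr xXr].
  by rewrite in_setC in_setU (negbTE xXr) (contraFF (subsetP ClSl x) (disjointFl SlSr xSr)).
- by apply: (perfect_mate_mono Mr) => x y _ _ exy; rewrite /= exy orbT.
Qed.

End AttachJoin.

Lemma kfeasible_attach_join a c Sl Sr : kfeasible vl a Sl -> kfeasible vr c Sr ->
  c <= a -> 0 < a -> kfeasible v (a - c) (Sl :|: Sr).
Proof.
case/kfeasibleP=> SlV Sldom [Xl [fl [XlS Xla Ml]]].
case/kfeasibleP=> SrV Srdom [Xr [fr [XrS Xrc Mr]]] ca a_gt0.
have [Cl ClXl Clc] : exists2 Cl : {set T}, Cl \subset Xl & #|Cl| = c.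
  by apply: subset_of_card; rewrite Xla.
have [f Mf] := perfect_mate_attach_join SlV SrV XlS XrS ClXl (etrans Clc (esym Xrc)) Ml Mr.
apply/kfeasibleP; split.
- by rewrite dV_node setUSS.
- by apply: (dominates_attach_join (Xl := Xl)); rewrite // -card_gt0 Xla.
exists (Xl :\: Cl), f; split=> //; last by rewrite cardsD (setIidPr ClXl) Xla Clc.
rewrite subsetI (subset_trans (subsetDl _ _) (subset_trans XlS (subsetIr _ _))) andbT.
by rewrite subsetU // (subset_trans (subsetDl _ _) (subset_trans XlS (subsetIl _ _))).
Qed.

Lemma minO_attach_ge m : minO v = Some m ->
  exists ml mr, [/\ minO vl = Some ml, minO vr = Some mr & ml + mr <= m].
Proof.
move=> Ev; have [k Hk] := minO_attained Ev; have [S HS <-] := gammaO_attained Hk.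
have [c [Hl Hr]] := kfeasible_attach_split HS.
have [ml El le_l] := minO_le_card Hl; have [mr Er le_r] := minO_le_card Hr.
exists ml, mr; split=> //.
by rewrite (card_attach_split (kfeasible_subset_dV HS)) leq_add.
Qed.

Lemma minO_attach_le ml mr : minO vl = Some ml -> minO vr = Some mr ->
  alpha vr <= beta vl -> 0 < beta vl -> exists2 m, minO v = Some m & m <= ml + mr.
Proof.
move=> El Er ab b_gt0.
have [Sl HSl <-] := gammaO_attained (gammaO_beta El).
have [Sr HSr <-] := gammaO_attained (gammaO_alpha Er).
have [m Ev le_m] := minO_le_card (kfeasible_attach_join HSl HSr ab b_gt0).
exists m; rewrite // -cardsU_disjoint //.
exact: disjointW (kfeasible_subset_dV HSl) (kfeasible_subset_dV HSr) lr.
Qed.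

End Attach.

Theorem lemma29 (T : finType) (e : rel T) (t v vl vr : dtree T) :
  simple_graph e ->
  distance_hereditary e ->
  is_dtree_of e t ->
  subtree v t ->
  v = DNode OAttach vl vr ->
  propP vl -> propP vr ->
  alpha vr <= beta vl ->
  ~ (alpha vl = 0 /\ beta vr = 0) ->
  ~ (alpha vr = 0 /\ beta vl = 0) ->
  minO v = oaddn (minO vl) (minO vr).
Proof.
move=> _ _ [uniq_t _] sub_vt Ev _ _ ab _ not_ab0; subst v.
have lr := disjoint_dV_children (uniq_leaves_subtree sub_vt uniq_t).
have b_gt0 : 0 < beta vl.
  by rewrite lt0n; apply/eqP => b0; apply: not_ab0; split=> //; apply/eqP; rewrite -leqn0 -b0.
case Emin: (minO _) => [m|].
  have [ml [mr [El Er le_m]]] := minO_attach_ge lr Emin.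
  have [m' Emin' le_m'] := minO_attach_le lr El Er ab b_gt0.
  move: Emin' le_m'; rewrite Emin El Er => -[<-] le_m'.
  by congr Some; apply/eqP; rewrite eqn_leq le_m le_m'.
case El: (minO vl) => [ml|] //; case Er: (minO vr) => [mr|] //.
by have [m' Emin' _] := minO_attach_le lr El Er ab b_gt0; rewrite Emin in Emin'.
Qed.
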